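(* Let $n\ge 2$ and let $f:\{0,1\}^n\to\{0,1\}^{n-1}$ be a function that eliminates one bit, i.e. there is $k\in\{0,\dots,n-1\}$ such that $f(x_{n-1}\dots x_{k+1}x_kx_{k-1}\dots x_0)=x_{n-1}\dots x_{k+1}x_{k-1}\dots x_0$ for all inputs. For $i=0,\dots,n-2$, run the algorithm $\mathrm{GPK}(\mathbf{e}_i)$ (with $m=n-1$), where $\mathbf{e}_i\in\{0,1\}^{n-1}$ is the string with a single $1$ in position $i$. Then each run outputs, with certainty, a string of the form $\mathbf{e}'_j\in\{0,1\}^n$ (the string of length $n$ with a single $1$ in position $j$), the $n-1$ outputs are distinct, and the unique $j\in\{0,\dots,n-1\}$ such that $\mathbf{e}'_j$ is not among the outputs is $j=k$, the eliminated bit. Hence the eliminated bit is determined by these $n-1$ runs.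
   Context: Bits of a string $\mathbf{x}=x_{n-1}\dots x_1x_0$ are indexed from the right starting at $0$; the string with a single $1$ in position $i$ is $0^{\,\ell-1-i}\,1\,0^{\,i}$ (of length $\ell$). For strings $\mathbf{y},\mathbf{z}$ of equal length, $\mathbf{y}\oplus\mathbf{z}$ is bitwise XOR and $\mathbf{y}\cdot\mathbf{z}=\bigoplus_j y_jz_j$. For $f:\{0,1\}^n\to\{0,1\}^m$, $\mathbf{U}_f$ is the unitary with $\mathbf{U}_f(\ket{\mathbf{x}}_n\otimes\ket{\mathbf{z}}_m)=\ket{\mathbf{x}}_n\otimes\ket{\mathbf{z}\oplus f(\mathbf{x})}_m$; $\mathbf{H}_k=\mathbf{H}^{\otimes k}$ with $\mathbf{H}$ the one-qubit Hadamard gate. The algorithm $\mathrm{GPK}(\mathbf{y})$ for a marker $\mathbf{y}\in\{0,1\}^m$: start in $\ket{\mathbf{0}}_n\otimes\ket{\mathbf{0}}_m$; apply Pauli $\mathbf{X}$ gates to the second register to obtain $\ket{\mathbf{0}}_n\otimes\ket{\mathbf{y}}_m$; apply $\mathbf{H}_{n+m}$ to all qubits; apply $\mathbf{U}_f$; apply $\mathbf{H}_n$ to the first register; measure the first register in the computational basis, obtaining an output $\delta\in\{0,1\}^n$. *)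

From mathcomp Require Import all_boot all_order all_algebra.
From mathcomp Require Import algC.
Set Implicit Arguments. Unset Strict Implicit. Unset Printing Implicit Defensive.
Import Order.TTheory GRing.Theory Num.Theory.
Local Open Scope ring_scope.

(* A bit string x_{n-1}...x_0 of length n: (x : bits n) i = x_i. *)
Definition bits (n : nat) := {ffun 'I_n -> bool}.

Definition bxor n (y z : bits n) : bits n := [ffun i => y i (+) z i].
Definition zero_bits n : bits n := [ffun => false].
Definition ebit n (i : 'I_n) : bits n := [ffun j => j == i].

Definition elim_bit n (k : 'I_n) (x : bits n) : bits n.-1 :=
  [ffun i => x (lift k i)].

(* states of an (n+m)-qubit system: amplitude of |x>_n (x) |z>_m *)
Definition state n m := bits n -> bits m -> algC.

Definition hadamard (b c : bool) : algC := (-1) ^+ (b && c) / sqrtC 2.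
Definition hadamardk k (b c : bits k) : algC := \prod_(j < k) hadamard (b j) (c j).

Definition init_state n m : state n m :=
  fun x z => if (x == zero_bits n) && (z == zero_bits m) then 1 else 0.

(* Pauli X on each qubit i of the second register with y_i = 1: |x,z> |-> |x, z xor y> *)
Definition applyX2 n m (y : bits m) (psi : state n m) : state n m :=
  fun x w => \sum_(z : bits m) (if w == bxor z y then psi x z else 0).

Definition applyHall n m (psi : state n m) : state n m :=
  fun x z => \sum_(x' : bits n) \sum_(z' : bits m)
               hadamardk x x' * hadamardk z z' * psi x' z'.

Definition applyUf n m (f : bits n -> bits m) (psi : state n m) : state n m :=
  fun x w => \sum_(z : bits m) (if w == bxor z (f x) then psi x z else 0).

Definition applyH1 n m (psi : state n m) : state n m :=
  fun x z => \sum_(x' : bits n) hadamardk x x' * psi x' z.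

Definition GPK_state n m (f : bits n -> bits m) (y : bits m) : state n m :=
  applyH1 (applyUf f (applyHall (applyX2 y (@init_state n m)))).

Definition GPK_prob n m (f : bits n -> bits m) (y : bits m) (delta : bits n) : algC :=
  \sum_(z : bits m) `|GPK_state f y delta z| ^+ 2.

From mathcomp Require Import all_boot all_order all_algebra.
From mathcomp Require Import algC.
From mathcomp Require Import ring.
Import Order.TTheory GRing.Theory Num.Theory.
Local Open Scope ring_scope.

(* Writing H^{(x)k} entrywise as <b|H_k|c> = 2^(-k/2) (-1)^(b.c), the state before
   measurement has amplitude 2^(-m/2) (-1)^(w.y) 2^(-n) sum_x (-1)^(d.x + y.f(x)) at
   |d>|w>.  If y.f(x) = d0.x for every x, the signs cancel at d = d0, every summand
   equals 1, and the amplitudes at |d0>|w> already carry total probability 1, so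
   GPK(y) outputs d0 with certainty.  For f eliminating bit k and y = e_i we have
   e_i.f(x) = x_(lift k i) = e'_(lift k i).x, so the outputs are e'_(lift k i): they
   are distinct, and the only index not of the form lift k i is k itself. *)

Definition bdot {n} (y z : bits n) : bool := \big[addb/false]_(j < n) (y j && z j).

Section BitDot.

Variable n : nat.
Implicit Types x y z t : bits n.

Lemma bdotC y z : bdot y z = bdot z y.
Proof. by apply: eq_bigr => j _; rewrite andbC. Qed.

Lemma bdot0r y : bdot y (zero_bits n) = false.
Proof. by rewrite /bdot big1 // => j _; rewrite ffunE andbF. Qed.

Lemma bdotDl y z t : bdot (bxor y z) t = bdot y t (+) bdot z t.
Proof.
rewrite /bdot -big_split; apply: eq_bigr => j _ /=.
by rewrite ffunE; case: (y j); case: (z j); case: (t j).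
Qed.

Lemma bdot_ebitr x (i : 'I_n) : bdot x (ebit i) = x i.
Proof.
rewrite /bdot (bigD1 i) //= ffunE eqxx andbT big1 ?addbF // => j /negbTE ji.
by rewrite ffunE ji andbF.
Qed.

Lemma eq_bxor_swap y z w : (w == bxor z y) = (z == bxor w y).
Proof.
by apply/eqP/eqP => ->; apply/ffunP => j; rewrite !ffunE;
  case: (z j); case: (y j); case: (w j).
Qed.

Lemma bxor_eq0 w y : (bxor w y == zero_bits n) = (w == y).
Proof.
apply/eqP/eqP => [wy|->]; apply/ffunP => j; last by rewrite !ffunE; case: (y j).
by move/ffunP: wy => /(_ j); rewrite !ffunE; case: (w j); case: (y j).
Qed.

End BitDot.

Definition hh : algC := (sqrtC 2)^-1.

Lemma prodr_sign (R : pzRingType) (I : finType) (b : I -> bool) :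
  \prod_i (-1) ^+ b i = (-1) ^+ (\big[addb/false]_i b i) :> R.
Proof.
by rewrite (big_morph (fun c : bool => (-1) ^+ c) (@signr_addb R) (id1 := 1) (id2 := false)).
Qed.

Lemma hadamardkE k (b c : bits k) : hadamardk b c = (-1) ^+ bdot b c * hh ^+ k.
Proof. by rewrite /hadamardk big_split /= prodr_sign prodr_const card_ord. Qed.

Lemma sum_hhX_sqr k : \sum_(x : bits k) (hh ^+ k) ^+ 2 = 1.
Proof.
rewrite sumr_const card_ffun card_bool card_ord -exprM mulnC exprM.
by rewrite /hh exprVn sqrtCK -exprMn_n -mulr_natr mulVf ?expr1n ?pnatr_eq0.
Qed.

Lemma sum_bxor_shift (V : nmodType) m (y w : bits m) (F : bits m -> V) :
  \sum_z (if w == bxor z y then F z else 0) = F (bxor w y).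
Proof.
under eq_bigr do rewrite eq_bxor_swap.
by rewrite -big_mkcond big_pred1_eq.
Qed.

Section GPK.

Variables (n m : nat) (f : bits n -> bits m) (y : bits m).

Lemma applyX2_init x w :
  applyX2 y (@init_state n m) x w = if (x == zero_bits n) && (w == y) then 1 else 0.
Proof. by rewrite /applyX2 sum_bxor_shift /init_state bxor_eq0. Qed.

Lemma applyHall_X2_init x z :
  applyHall (applyX2 y (@init_state n m)) x z = hadamardk x (zero_bits n) * hadamardk z y.
Proof.
rewrite /applyHall (bigD1 (zero_bits n)) //= [X in _ + X]big1 => [|x' /negbTE x'0].
  rewrite (bigD1 y) //= applyX2_init !eqxx mulr1 big1 ?addr0 // => z' /negbTE z'y.
  by rewrite applyX2_init z'y andbF mulr0.
by apply: big1 => z' _; rewrite applyX2_init x'0 mulr0.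
Qed.

Lemma GPK_stateE d w :
  GPK_state f y d w = (-1) ^+ bdot w y * hh ^+ m *
    \sum_(x : bits n) (hh ^+ n) ^+ 2 * (-1) ^+ (bdot d x (+) bdot (f x) y).
Proof.
rewrite /GPK_state /applyH1 mulr_sumr; apply: eq_bigr => x _.
rewrite /applyUf sum_bxor_shift applyHall_X2_init !hadamardkE bdot0r bdotDl.
rewrite !signr_addb; ring.
Qed.

Hypothesis (d0 : bits n) (f_lin : forall x, bdot (f x) y = bdot d0 x).

Lemma GPK_state_lin w : GPK_state f y d0 w = (-1) ^+ bdot w y * hh ^+ m.
Proof.
rewrite GPK_stateE; under eq_bigr do rewrite f_lin addbb mulr1.
by rewrite sum_hhX_sqr mulr1.
Qed.

Lemma GPK_prob_lin : GPK_prob f y d0 = 1.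
Proof.
rewrite /GPK_prob -(sum_hhX_sqr m); apply: eq_bigr => w _.
rewrite GPK_state_lin normrMsign ger0_norm // exprn_ge0 //.
by rewrite invr_ge0 sqrtC_ge0.
Qed.

End GPK.

Lemma bdot_elim_bit_ebit n (k : 'I_n) (i : 'I_n.-1) (x : bits n) :
  bdot (elim_bit k x) (ebit i) = bdot (ebit (lift k i)) x.
Proof. by rewrite bdot_ebitr bdotC bdot_ebitr ffunE. Qed.

Lemma lift_neq_allP n (k j : 'I_n) : (forall i, lift k i != j) <-> j = k.
Proof.
split=> [liftNj|-> i]; last by rewrite eq_sym neq_lift.
have [//|/unlift_some [i j_lift _]] := eqVneq k j.
by have := liftNj i; rewrite j_lift eqxx.
Qed.

Theorem lemma2p2 (n : nat) (hn : (2 <= n)%N) (k : 'I_n)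
    (f : bits n -> bits n.-1) (hf : forall x, f x = elim_bit k x) :
  exists out : 'I_n.-1 -> 'I_n,
    [/\ forall i : 'I_n.-1, GPK_prob f (ebit i) (ebit (out i)) = 1,
        injective out &
        forall j : 'I_n, (forall i, out i != j) <-> j = k].
Proof.
exists (lift k); split.
- by move=> i; apply: GPK_prob_lin => x; rewrite hf bdot_elim_bit_ebit.
- exact: lift_inj.
- exact: lift_neq_allP.
Qed.
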